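(* Let $n$ be a non-negative integer, let $(a_k)_{k\ge 1}$ be a sequence of complex numbers, and let $r$ be a complex number that is not a negative integer. Then $$\sum_{k = 1}^n \sum_{j = 0}^{k - 1} \frac{a_{n - j}}{k - j + r} = \sum_{k = 1}^n a_k H_{k + r} - H_r \sum_{k = 1}^n a_k.$$ In particular, $$\sum_{k = 1}^n \sum_{j = 0}^{k - 1} \frac{a_{n - j}}{k - j} = \sum_{k = 1}^n a_k H_k \qquad\text{and}\qquad \sum_{k = 1}^n \sum_{j = 0}^{k - 1} \frac{a_{n - j}}{2k - 2j - 1} = \sum_{k = 1}^n a_k O_k.$$
   Context: For a complex number $z$ that is not a negative integer, the harmonic number is $H_z=\sum_{m=1}^\infty\left(\frac1m-\frac1{m+z}\right)$ (so $H_0=0$ and $H_n=\sum_{m=1}^n \frac1m$ for non-negative integers $n$). The odd harmonic numbers are $O_n=\sum_{m=1}^n \frac{1}{2m-1}$. Empty sums are zero. *)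

From Stdlib Require Import Reals.
From Coquelicot Require Export Coquelicot.
Open Scope C_scope.

Definition harm_term (z : C) (m : nat) : C :=
  / RtoC (INR m) - / (RtoC (INR m) + z).

(* H_z = sum_{m>=1} (1/m - 1/(m+z)), the complex series summed via its
   real and imaginary parts (Coquelicot's Series is real-valued). Index
   m >= 1 is realised by shifting: term at index i is harm_term z (S i). *)
Definition H (z : C) : C :=
  (Series (fun i => Re (harm_term z (S i))),
   Series (fun i => Im (harm_term z (S i)))).

Definition O (n : nat) : C :=
  sum_n_m (fun m => / RtoC (2 * INR m - 1)) 1 n.

Definition neg_int (z : C) : Prop := exists m : nat, z = RtoC (- INR (S m)).

From Stdlib Require Import Reals Lra Lia.
From Coquelicot Require Import Coquelicot.
Open Scope C_scope.

(* The substitution m = n - j, i = k - j maps the triangle 0 <= j < k <= n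
   bijectively onto 1 <= i <= m <= n, so each left-hand side equals
   sum_m a_m sum_{i=1}^m f(i) with f(i) = 1/(i+r), 1/i or 1/(2i-1).
   Shifting the index of the series defining H leaves a telescoping series,
   whence H_{z+1} = H_z + 1/(z+1) and so H_{m+r} - H_r = sum_{i=1}^m 1/(i+r). *)

(* For k = 0 the truncated [k - 1] would make the inner sum on the right
   non-empty. *)
Lemma sum_triangle_rev_row {G : AbelianMonoid} (u : nat -> nat -> G) (n k : nat) :
  (1 <= k)%nat ->
  sum_n_m (fun j => u (S n - j)%nat (S k - j)%nat) 0 k
  = plus (u (S n) (S k)) (sum_n_m (fun j => u (n - j)%nat (k - j)%nat) 0 (k - 1)).
Proof.
  intros Hk.
  rewrite sum_Sn_m by lia.
  replace k with (S (k - 1)) at 2 by lia.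
  now rewrite <- sum_n_m_S.
Qed.

Lemma sum_triangle_rev {G : AbelianMonoid} (u : nat -> nat -> G) (n : nat) :
  sum_n_m (fun k => sum_n_m (fun j => u (n - j)%nat (k - j)%nat) 0 (k - 1)) 1 n
  = sum_n_m (fun m => sum_n_m (u m) 1 m) 1 n.
Proof.
  induction n as [|n IH].
  - now rewrite !sum_n_m_zero by lia.
  - rewrite (sum_n_Sm (fun m => sum_n_m (u m) 1 m)), <- IH by lia.
    rewrite sum_Sn_m, <- sum_n_m_S, sum_n_n by lia.
    rewrite (sum_n_m_ext_loc _ (fun k => plus (u (S n) (S k))
               (sum_n_m (fun j => u (n - j)%nat (k - j)%nat) 0 (k - 1)))).
    2:{ intros k Hk. replace (S k - 1)%nat with k by lia.
        apply sum_triangle_rev_row; lia. }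
    rewrite sum_n_m_plus, (sum_Sn_m (u (S n))), <- (sum_n_m_S (u (S n))) by lia.
    simpl (S n - (1 - 1))%nat; simpl (1 - (1 - 1))%nat.
    now rewrite plus_assoc, (plus_comm _ (sum_n_m _ 1 n)).
Qed.

(* Coquelicot states these over [Ring.AbelianMonoid C_Ring], which does not
   match sums over [C_AbelianMonoid] syntactically. *)
Lemma sum_n_m_Cplus (u v : nat -> C) (m n : nat) :
  sum_n_m (fun k => u k + v k) m n = sum_n_m u m n + sum_n_m v m n.
Proof. exact (sum_n_m_plus u v m n). Qed.

Lemma sum_n_m_Cmult_l (c : C) (u : nat -> C) (m n : nat) :
  sum_n_m (fun k => c * u k) m n = c * sum_n_m u m n.
Proof. exact (sum_n_m_mult_l (K := C_Ring) c u m n). Qed.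

Lemma Cplus_minus_cancel_l (x y : C) : x + y - x = y.
Proof. ring. Qed.

Lemma sum_triangle_rev_diff (a : nat -> C) (f : C -> C) (n : nat) :
  sum_n_m (fun k => sum_n_m (fun j =>
      a (n - j)%nat * f (RtoC (INR k) - RtoC (INR j))) 0 (k - 1)) 1 n
  = sum_n_m (fun m => a m * sum_n_m (fun i => f (RtoC (INR i))) 1 m) 1 n.
Proof.
  pose (u m i := a m * f (RtoC (INR i))).
  transitivity (sum_n_m (fun k =>
      sum_n_m (fun j => u (n - j)%nat (k - j)%nat) 0 (k - 1)) 1 n).
  - apply sum_n_m_ext_loc. intros k Hk. apply sum_n_m_ext_loc. intros j Hj.
    unfold u. now rewrite minus_INR, RtoC_minus by lia.
  - rewrite sum_triangle_rev.
    apply sum_n_m_ext. intro m. apply sum_n_m_Cmult_l.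
Qed.

Lemma im_le_Cmod (c : C) : (Rabs (Im c) <= Cmod c)%R.
Proof.
  unfold Cmod. rewrite <- sqrt_Rsqr_abs. apply sqrt_le_1_alt.
  pose proof (Rle_0_sqr (Re c)). unfold Rsqr, Re, Im in *. simpl. lra.
Qed.

Lemma is_series_telescoping_inv :
  is_series (fun i => / INR (S i) - / INR (S (S i)))%R 1%R.
Proof.
  change (is_lim_seq (sum_n (fun i => / INR (S i) - / INR (S (S i)))%R) 1%R).
  apply (is_lim_seq_ext (fun N => 1 - / INR (S (S N)))%R).
  { induction n as [|n IH].
    - rewrite sum_O. simpl. field.
    - rewrite sum_Sn, <- IH. change plus with Rplus.
      rewrite !S_INR. field. pose proof (pos_INR n). lra. }
  enough (L : is_lim_seq (fun N => 1 - / INR (S (S N)))%R (1 - 0)%R)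
    by now rewrite Rminus_0_r in L.
  apply is_lim_seq_minus'; [apply is_lim_seq_const|].
  replace (Finite 0) with (Rbar_inv p_infty) by reflexivity.
  apply is_lim_seq_inv; [|discriminate].
  apply (is_lim_seq_ext (fun n => INR (n + 2))); [intro n; f_equal; lia|].
  apply is_lim_seq_incr_n, is_lim_seq_INR.
Qed.

Lemma harm_term_bound (z : C) (m : nat) :
  (1 <= INR m)%R -> (2 * Cmod z <= INR m)%R ->
  (Cmod (harm_term z m) <= 4 * Cmod z * (/ INR m - / INR (S m)))%R.
Proof.
  (* |m + z| >= m/2, so |z| / (m |m + z|) <= 2|z| / m^2 <= 4|z| / (m (m+1)). *)
  intros Hm1 Hmz. rewrite S_INR. set (M := INR m) in *.
  assert (Hd : (M - Cmod z <= Cmod (RtoC M + z))%R).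
  { assert (Cmod (RtoC M) <= Cmod (RtoC M + z) + Cmod (- z))%R.
    { replace (RtoC M) with ((RtoC M + z) + - z) at 1 by ring. apply Cmod_triangle. }
    rewrite Cmod_opp, Cmod_R, Rabs_pos_eq in H; lra. }
  assert (Hw : RtoC M + z <> 0).
  { intro E. rewrite E, Cmod_0 in Hd. pose proof (Cmod_ge_0 z). lra. }
  assert (HM : RtoC M <> 0) by (intro E; apply RtoC_inj in E; lra).
  unfold harm_term. fold M.
  replace (/ RtoC M - / (RtoC M + z)) with (z * / (RtoC M * (RtoC M + z))) by (field; auto).
  rewrite Cmod_mult, Cmod_inv, Cmod_mult, Cmod_R, Rabs_pos_eq
    by (try lra; apply Cmult_neq_0; auto).
  replace (4 * Cmod z * (/ M - / (M + 1)))%R with (Cmod z * / (M * (M + 1) / 4))%R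
    by (field; lra).
  pose proof (Cmod_ge_0 z).
  apply Rmult_le_compat_l; [lra|].
  apply Rinv_le_contravar; nra.
Qed.

Lemma ex_series_harm_term (p : C -> R) (z : C) :
  (forall c, Rabs (p c) <= Cmod c)%R ->
  ex_series (fun i => p (harm_term z (S i))).
Proof.
  intros Hp.
  destruct (nfloor_ex (2 * Cmod z)) as [N HN]; [pose proof (Cmod_ge_0 z); lra|].
  apply (ex_series_incr_n _ N).
  apply (@ex_series_le R_AbsRing R_CompleteNormedModule _
           (fun k => 4 * Cmod z * (/ INR (S (N + k)) - / INR (S (S (N + k)))))%R).
  - intro k. eapply Rle_trans; [apply Hp|].
    pose proof (pos_INR (N + k)). rewrite plus_INR in *.
    apply harm_term_bound; rewrite S_INR, ?plus_INR; pose proof (pos_INR k); lra.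
  - apply (@ex_series_scal_l R_AbsRing R_NormedModule).
    apply (ex_series_incr_n (fun i => / INR (S i) - / INR (S (S i)))%R N).
    eexists. apply is_series_telescoping_inv.
Qed.

Lemma Series_shift_telescoping (u v : nat -> R) (c : R) :
  ex_series u ->
  (forall i, v i = u (S i) + c * (/ INR (S i) - / INR (S (S i))))%R ->
  Series v = (Series u - u 0%nat + c)%R.
Proof.
  intros Hu Hv.
  rewrite (Series_ext _ _ Hv), Series_plus.
  - rewrite Series_scal_l, (is_series_unique _ _ is_series_telescoping_inv).
    rewrite (Series_incr_1 u Hu). lra.
  - now apply (ex_series_incr_1 u).
  - apply (@ex_series_scal_l R_AbsRing R_NormedModule).
    eexists. apply is_series_telescoping_inv.
Qed.

Lemma harm_term_succ (z : C) (i : nat) :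
  harm_term (z + 1) (S i)
  = harm_term z (S (S i)) + RtoC (/ INR (S i) - / INR (S (S i))).
Proof.
  unfold harm_term.
  rewrite RtoC_minus, !RtoC_inv by (apply not_0_INR; lia).
  replace (RtoC (INR (S (S i))) + z) with (RtoC (INR (S i)) + (z + 1))
    by (rewrite (S_INR (S i)), RtoC_plus; ring).
  ring.
Qed.

Lemma harm_term_one (z : C) : harm_term z 1 = 1 - / (z + 1).
Proof.
  unfold harm_term. change (INR 1) with 1%R.
  rewrite <- RtoC_inv, Rinv_1 by lra. f_equal. f_equal. apply Cplus_comm.
Qed.

Lemma H_succ (z : C) : H (z + 1) = H z + / (z + 1).
Proof.
  apply injective_projections.
  - change (Re (H (z + 1)) = Re (H z + / (z + 1))).
    rewrite re_plus.
    change (Re (H ?w)) with (Series (fun i => Re (harm_term w (S i)))).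
    rewrite (Series_shift_telescoping (fun i => Re (harm_term z (S i))) _ 1)
      by (try apply ex_series_harm_term, re_le_Cmod;
          intro i; rewrite harm_term_succ, re_plus, re_RtoC; ring).
    rewrite harm_term_one. unfold Cminus. rewrite re_plus. change (Re 1) with 1%R.
    change (Re (- ?w)) with (- Re w)%R. ring.
  - change (Im (H (z + 1)) = Im (H z + / (z + 1))).
    rewrite im_plus.
    change (Im (H ?w)) with (Series (fun i => Im (harm_term w (S i)))).
    rewrite (Series_shift_telescoping (fun i => Im (harm_term z (S i))) _ 0)
      by (try apply ex_series_harm_term, im_le_Cmod;
          intro i; rewrite harm_term_succ, im_plus, im_RtoC; ring).
    rewrite harm_term_one. unfold Cminus. rewrite im_plus. change (Im 1) with 0%R.
    change (Im (- ?w)) with (- Im w)%R. ring.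
Qed.

Lemma H_add_nat (z : C) (m : nat) :
  H (RtoC (INR m) + z) = H z + sum_n_m (fun i => / (RtoC (INR i) + z)) 1 m.
Proof.
  induction m as [|m IH].
  - rewrite sum_n_m_zero by lia. change (INR 0) with 0%R.
    change (@zero C_AbelianMonoid) with (RtoC 0). now rewrite Cplus_0_l, Cplus_0_r.
  - rewrite sum_n_Sm by lia. change plus with Cplus.
    replace (RtoC (INR (S m)) + z) with (RtoC (INR m) + z + 1)
      by (rewrite S_INR, RtoC_plus; ring).
    rewrite H_succ, IH. ring.
Qed.

Lemma H_zero : H 0 = 0.
Proof.
  assert (E : forall i, harm_term 0 i = 0)
    by (intro i; unfold harm_term; rewrite Cplus_0_r; ring).
  unfold H.
  rewrite (Series_ext _ (fun _ => 0 * 0)%R), (Series_ext (fun i => Im _) (fun _ => 0 * 0)%R)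
    by (intro i; rewrite E; simpl; ring).
  now rewrite (Series_scal_l 0 (fun _ => 0%R)), Rmult_0_l.
Qed.

Lemma H_nat (m : nat) : H (RtoC (INR m)) = sum_n_m (fun i => / RtoC (INR i)) 1 m.
Proof.
  rewrite <- (Cplus_0_r (RtoC (INR m))), H_add_nat, H_zero, Cplus_0_l.
  apply sum_n_m_ext. intro i. now rewrite Cplus_0_r.
Qed.

Theorem theorem3 (n : nat) (a : nat -> C) (r : C) (hr : ~ neg_int r) :
  sum_n_m (fun k => sum_n_m (fun j =>
      a (n - j)%nat / (RtoC (INR k) - RtoC (INR j) + r)) 0 (k - 1)) 1 n
  = sum_n_m (fun k => a k * H (RtoC (INR k) + r)) 1 n
    - H r * sum_n_m a 1 n
  /\
  sum_n_m (fun k => sum_n_m (fun j =>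
      a (n - j)%nat / (RtoC (INR k) - RtoC (INR j))) 0 (k - 1)) 1 n
  = sum_n_m (fun k => a k * H (RtoC (INR k))) 1 n
  /\
  sum_n_m (fun k => sum_n_m (fun j =>
      a (n - j)%nat / (2 * RtoC (INR k) - 2 * RtoC (INR j) - 1)) 0 (k - 1)) 1 n
  = sum_n_m (fun k => a k * O k) 1 n.
Proof.
  split; [|split].
  - etransitivity; [apply (sum_triangle_rev_diff a (fun d => / (d + r)))|].
    rewrite (sum_n_m_ext (fun k => a k * H (RtoC (INR k) + r))
      (fun k => H r * a k + a k * sum_n_m (fun i => / (RtoC (INR i) + r)) 1 k))
      by (intro k; now rewrite H_add_nat, Cmult_plus_distr_l, (Cmult_comm (a k))).
    rewrite sum_n_m_Cplus, sum_n_m_Cmult_l.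
    symmetry. apply Cplus_minus_cancel_l.
  - etransitivity; [apply (sum_triangle_rev_diff a Cinv)|].
    apply sum_n_m_ext. intro k. now rewrite H_nat.
  - rewrite (sum_n_m_ext _ (fun k => sum_n_m (fun j =>
        a (n - j)%nat * / (2 * (RtoC (INR k) - RtoC (INR j)) - 1)) 0 (k - 1)))
      by (intro k; apply sum_n_m_ext; intro j; unfold Cdiv; do 2 f_equal; ring).
    etransitivity; [apply (sum_triangle_rev_diff a (fun d => / (2 * d - 1)))|].
    apply sum_n_m_ext. intro k. unfold O. f_equal.
    apply sum_n_m_ext. intro i. now rewrite RtoC_minus, RtoC_mult.
Qed.
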